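(* Let $\theta \in (0,1)$ and let $X$ be a nonnegative random variable which is not almost surely zero and which is $\theta$-subscalable. Then $\mathbb{E}[X] = \infty$.
   Context: For $\theta \in (0,1)$, a nonnegative random variable $X$ with survival function $\overline{F}(x) = \mathbb{P}(X > x)$ is called $\theta$-subscalable if $\theta \, \overline{F}(x) \leq \overline{F}(x/\theta)$ for all $x \geq 0$. *)

From HB Require Import structures.
From mathcomp Require Import all_boot all_order all_algebra.
From mathcomp Require Import all_classical all_reals all_analysis.
Set Implicit Arguments. Unset Strict Implicit. Unset Printing Implicit Defensive.
Import Order.TTheory GRing.Theory Num.Theory.
Local Open Scope ring_scope.
Local Open Scope ereal_scope.

Definition subscalable d (T : measurableType d) (R : realType)
  (P : probability T R) (X : {RV P >-> R}) (theta : R) : Prop :=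
  forall x : R, (0 <= x)%R -> (theta%:E * ccdf X x <= ccdf X (x / theta)%R).

(* Choose a > 0 with p := P(X > a) > 0, which exists because X is not almost
   surely 0. Iterating subscalability gives P(X > a / theta^n) >= theta^n p.
   On the geometric grid y_n := a / theta^n the layer-cake bound
   E[X] >= sum_n (y_(n+1) - y_n) P(X > y_(n+1)) then has every term at least
   a (1 - theta) p, so the expectation dominates a divergent series. *)
From HB Require Import structures.
From mathcomp Require Import all_boot all_order all_algebra.
From mathcomp Require Import all_classical all_reals all_analysis.
From mathcomp Require Import ring lra measurable_realfun.
Set Implicit Arguments. Unset Strict Implicit. Unset Printing Implicit Defensive.
Import Order.TTheory GRing.Theory Num.Theory.
Local Open Scope ring_scope.
Local Open Scope ereal_scope.
Local Open Scope classical_set_scope.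

Lemma sum_increments_lt_le (R : realDomainType) (y : nat -> R) (x : R) N :
  (\sum_(n < N) (y n.+1 - y n) * (y n.+1 < x)%R%:R <= Num.max 0 (x - y 0%N))%R.
Proof.
elim: N y => [|N IH] y; first by rewrite big_ord0 le_max lexx.
rewrite big_ord_recl /=.
have := IH (fun n => y n.+1); rewrite /= le_max.
by case: ltrP => y1x; rewrite ?mulr1 ?mulr0 ?add0r le_max => /orP[]; lra.
Qed.

Lemma natmul_le_pinfty (R : archiFieldType) (r : R) (e : \bar R) : (0 < r)%R ->
  (forall N, (r *+ N)%:E <= e) -> e = +oo.
Proof.
move=> r_gt0; case: e => [e le_e | // | /(_ 0%N) //].
have : (e < r *+ (Num.truncn (e / r)).+1)%R.
  by rewrite -mulr_natl -ltr_pdivrMr // truncnS_gt.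
by rewrite ltNge -lee_fin le_e.
Qed.

Section tail_bounds.
Context d (T : measurableType d) (R : realType) (P : probability T R).
Variable X : {RV P >-> R}.

Lemma subscalable_iter theta a n : (0 <= theta)%R -> subscalable X theta ->
  (0 <= a)%R -> (theta ^+ n)%:E * ccdf X a <= ccdf X (a / theta ^+ n).
Proof.
move=> theta_ge0 sub a_ge0; elim: n => [|n IH].
  by rewrite expr0 mul1e divr1.
rewrite exprSr EFinM -muleA invfM mulrA.
apply: le_trans (sub _ _); last by rewrite divr_ge0 ?exprn_ge0.
by rewrite muleCA; apply: lee_wpmul2l; rewrite ?lee_fin.
Qed.

Hypothesis X_ge0 : forall t, (0 <= X t)%R.

Lemma exists_ccdf_gt0 : ~ {ae P, forall t, X t = 0%R} ->
  exists2 a : R, (0 < a)%R & 0 < ccdf X a.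
Proof.
move=> X_not_ae0; apply: contrapT => ccdf_eq0; apply: X_not_ae0.
have ccdf0 : ccdf X 0 = 0.
  rewrite -(cvg_lim _ (@ccdf_right_continuous _ _ _ P X 0%R)) //.
  apply: cvg_lim => //; apply: cvg_near_cst; near=> r.
  apply/eqP; rewrite eq_le measure_ge0 andbT leNgt; apply/negP => ccdf_gt0.
  by apply: ccdf_eq0; exists r => //; near: r; exact: nbhs_right_gt.
exists (X @^-1` `]0%R, +oo[); split => [|//|t /= Xt_neq0].
  exact: measurable_funPTI.
by rewrite in_itv /= andbT lt_neqAle X_ge0 andbT eq_sym; apply/eqP.
Unshelve. all: by end_near.
Qed.

Lemma expectation_ge_sum_ccdf (y : nat -> R) N :
  (0 <= y 0%N)%R -> (forall n, y n <= y n.+1)%R ->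
  \sum_(n < N) (y n.+1 - y n)%:E * ccdf X (y n.+1) <= 'E_P[X].
Proof.
move=> y0_ge0 y_nd.
pose A n := X @^-1` `]y n.+1, +oo[.
have mA n : measurable (A n) by exact: measurable_funPTI.
have inA n t : (t \in A n) = (y n.+1 < X t)%R.
  by apply/idP/idP; rewrite inE /A /= in_itv /= andbT.
have dy_ge0 n : (0 <= y n.+1 - y n)%R by rewrite subr_ge0.
pose step t := \sum_(n < N) ((y n.+1 - y n) * \1_(A n) t)%:E.
have mstep n : measurable_fun [set: T]
    (fun t => ((y n.+1 - y n) * \1_(A n) t)%:E : \bar R).
  by apply/measurable_EFinP; apply: measurable_funM => //; exact: measurable_indic.
rewrite expectation_def; apply: (@le_trans _ _ (\int[P]_t step t)).
  rewrite ge0_integral_sum //; last by move=> n t _; rewrite lee_fin mulr_ge0.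
  apply: lee_sum => n _; under eq_integral do rewrite EFinM.
  rewrite ge0_integralZl_EFin //; last exact/measurable_EFinP/measurable_indic.
  by rewrite integral_indic // setIT.
apply: ge0_le_integral => //.
- by move=> t _; apply: sume_ge0 => n _; rewrite lee_fin mulr_ge0.
- exact: emeasurable_sum.
- by apply/measurable_EFinP; exact: measurable_funP.
move=> t _; rewrite /step sumEFin lee_fin.
under eq_bigr do rewrite indicE inA.
apply: le_trans (sum_increments_lt_le y (X t) N) _.
by rewrite ge_max X_ge0 gerBl.
Qed.

End tail_bounds.

Theorem lemma5 (d : measure_display) (T : measurableType d) (R : realType)
  (P : probability T R) (X : {RV P >-> R}) (theta : R) :
  (0 < theta < 1)%R ->
  (forall t, (0 <= X t)%R) ->
  ~ {ae P, forall t, X t = 0%R} ->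
  subscalable X theta ->
  'E_P[X] = +oo.
Proof.
move=> /andP[theta_gt0 theta_lt1] X_ge0 X_not_ae0 sub.
have [a a_gt0 tail_gt0] := exists_ccdf_gt0 X_ge0 X_not_ae0.
have tail_fin : ccdf X a \is a fin_num by rewrite /ccdf fin_num_measure.
pose y n := (a / theta ^+ n)%R.
have y_nd n : (y n <= y n.+1)%R.
  rewrite /y exprSr invfM mulrA ler_peMr ?invr_ge1 ?ltW ?unitf_gt0 //.
  by rewrite divr_gt0 ?exprn_gt0.
pose r := (a * (1 - theta) * fine (ccdf X a))%R.
have r_le n : r%:E <= (y n.+1 - y n)%:E * ccdf X (y n.+1).
  have thetaSn_neq0 : (theta ^+ n.+1 != 0)%R by rewrite expf_neq0 ?gt_eqF.
  have -> : (y n.+1 - y n = a * (1 - theta) / theta ^+ n.+1)%R.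
    by rewrite /y exprSr; field; rewrite !gt_eqF ?exprn_gt0.
  rewrite /r EFinM fineK // -{1}(divfK thetaSn_neq0 (a * (1 - theta))%R).
  rewrite EFinM -muleA; apply: lee_wpmul2l.
    by rewrite lee_fin divr_ge0 ?exprn_ge0 ?mulr_ge0 ?subr_ge0 ?ltW.
  by apply: subscalable_iter; rewrite ?ltW.
apply: (@natmul_le_pinfty _ r).
  by rewrite !mulr_gt0 ?subr_gt0 // fine_gt0 // tail_gt0 ltey_eq tail_fin.
move=> N; apply: le_trans (expectation_ge_sum_ccdf X_ge0 N _ y_nd).
  have -> : (r *+ N)%:E = \sum_(n < N) r%:E by rewrite sumEFin sumr_const card_ord.
  by apply: lee_sum => n _; exact: r_le.
by rewrite /y expr0 divr1 ltW.
Qed.
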